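(* Let $0<\mu\le L$, $f\in\mathcal S^2_{\mu,L}(\mathbb R^n)$ with minimizer $x^*$, $\beta\in[0,1]$, $s>0$, and let $X=X(t)$ solve $$\ddot X+2\sqrt\mu\,\dot X+\beta\sqrt s\,\nabla^2 f(X)\dot X+(1+\sqrt{\mu s})\nabla f(X)=0.$$ Define $$\mathcal E_\beta(t)=(1+\sqrt{\mu s})\big(f(X)-f(x^* )\big)+\tfrac14\|\dot X\|^2+\tfrac14\big\|\dot X+2\sqrt\mu(X-x^* )+\beta\sqrt s\,\nabla f(X)\big\|^2.$$ Then $$\frac{d\mathcal E_\beta(t)}{dt}\le-\frac{\sqrt\mu}{4}\mathcal E_\beta(t)-\Delta_\beta,$$ where $$\Delta_\beta=\frac14\left(\frac{8\beta s\sqrt\mu-3s\beta^2\sqrt\mu}{4}\|\nabla f(X)\|^2+2\sqrt\mu\|\dot X\|^2+(\sqrt\mu+\mu\sqrt s)\big(f(X)-f(x^* )\big)\right).$$ In particular, $\frac{d\mathcal E_\beta(t)}{dt}\le-\frac{\sqrt\mu}{4}\mathcal E_\beta(t)$.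
   Context: $\mathcal S^2_{\mu,L}(\mathbb R^n)$ is the class of twice differentiable, $\mu$-strongly convex functions $f:\mathbb R^n\to\mathbb R$ (i.e. $f(y)\ge f(x)+\langle\nabla f(x),y-x\rangle+\frac\mu2\|y-x\|^2$) whose gradient is $L$-Lipschitz and whose Hessian is Lipschitz in Frobenius norm. *)

From HB Require Import structures.
From mathcomp Require Import all_boot all_order all_algebra.
From mathcomp Require Import all_classical all_reals all_analysis.
Set Implicit Arguments. Unset Strict Implicit. Unset Printing Implicit Defensive.
Import Order.TTheory GRing.Theory Num.Theory.
Import numFieldNormedType.Exports.
Local Open Scope ring_scope.

Section Defs.
Variables (R : realType) (n : nat).

(* Euclidean inner product and norm on R^n (the library norm on matrices is the sup norm). *)
Definition dotv (u v : 'cV[R]_n) : R := \sum_(i < n) u i 0 * v i 0.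
Definition enorm (u : 'cV[R]_n) : R := Num.sqrt (dotv u u).
Definition frob (A : 'M[R]_n) : R := Num.sqrt (\sum_(i < n) \sum_(j < n) A i j ^+ 2).

Definition ebase (i : 'I_n) : 'cV[R]_n := delta_mx i 0.

Definition grad (f : 'cV[R]_n -> R) (x : 'cV[R]_n) : 'cV[R]_n :=
  \col_(i < n) 'D_(ebase i) f x.

Definition hessian (f : 'cV[R]_n -> R) (x : 'cV[R]_n) : 'M[R]_n :=
  \matrix_(i < n, j < n) 'D_(ebase j) (fun y => grad f y i 0) x.

Definition S2 (mu L : R) (f : 'cV[R]_n -> R) : Prop :=
  [/\ (forall x, differentiable f x),
      (forall x, differentiable (grad f) x),
      (forall x y, f y >= f x + dotv (grad f x) (y - x) + mu / 2 * enorm (y - x) ^+ 2),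
      (forall x y, enorm (grad f x - grad f y) <= L * enorm (x - y)) &
      (exists M : R, forall x y, frob (hessian f x - hessian f y) <= M * enorm (x - y))].

End Defs.

(* Along the flow, W := X' + 2 sqrt(mu) (X - x* ) + beta sqrt(s) grad f(X) satisfies
   W' = -(1 + sqrt(mu s)) grad f(X), so differentiating E_beta the cross terms cancel:
     E_beta' = - sqrt(mu) |X'|^2 - (beta sqrt(s) / 2) <X', hess f(X) X'>
               - (1 + sqrt(mu s)) sqrt(mu) <grad f(X), X - x*>
               - (1 + sqrt(mu s)) (beta sqrt(s) / 2) |grad f(X)|^2.
   The Hessian term is nonpositive because the gradient of a strongly convex function is
   strictly monotone, strong convexity bounds <grad f(X), X - x*> from below by
   f(X) - f(x* ) + mu/2 |X - x*|^2, and |W|^2 <= 6 |X'|^2 + 8 mu |X - x*|^2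
   + 3 beta^2 s |grad f(X)|^2; comparing coefficients gives the bound. *)

From HB Require Import structures.
From mathcomp Require Import all_boot all_order all_algebra.
From mathcomp Require Import all_classical all_reals all_analysis.
From mathcomp Require Import ring lra.
Import Order.TTheory GRing.Theory Num.Theory.
Import numFieldNormedType.Exports.
Local Open Scope ring_scope.
Set Implicit Arguments.
Unset Strict Implicit.

Section InnerProduct.
Context {R : realType} {n : nat}.
Implicit Types (u v w : 'cV[R]_n) (k : R).

Lemma dotvC u v : dotv u v = dotv v u.
Proof. by apply: eq_bigr => i _; rewrite mulrC. Qed.

Lemma dotvDl u v w : dotv (u + v) w = dotv u w + dotv v w.
Proof. by rewrite /dotv -big_split; apply: eq_bigr => i _; rewrite !mxE mulrDl. Qed.

Lemma dotvZl k u v : dotv (k *: u) v = k * dotv u v.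
Proof. by rewrite /dotv mulr_sumr; apply: eq_bigr => i _; rewrite !mxE mulrA. Qed.

Lemma dotvNl u v : dotv (- u) v = - dotv u v.
Proof. by rewrite -scaleN1r dotvZl mulN1r. Qed.

Lemma dotvDr u v w : dotv u (v + w) = dotv u v + dotv u w.
Proof. by rewrite dotvC dotvDl !(dotvC u). Qed.

Lemma dotvZr k u v : dotv u (k *: v) = k * dotv u v.
Proof. by rewrite dotvC dotvZl dotvC. Qed.

Lemma dotvNr u v : dotv u (- v) = - dotv u v.
Proof. by rewrite dotvC dotvNl dotvC. Qed.

Lemma dotv0r u : dotv u 0 = 0.
Proof. by rewrite /dotv big1 // => i _; rewrite mxE mulr0. Qed.

Lemma dotvv_ge0 v : 0 <= dotv v v.
Proof. by apply: sumr_ge0 => i _; rewrite -expr2 sqr_ge0. Qed.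

Lemma dotvv_eq0 v : (dotv v v == 0) = (v == 0).
Proof.
apply/idP/eqP => [|->]; last by rewrite dotv0r.
rewrite psumr_eq0 => [/allP v0|i _]; last by rewrite -expr2 sqr_ge0.
apply/matrixP => i j; rewrite (ord1 j) mxE.
by apply/eqP; rewrite -sqrf_eq0 expr2 (implyP (v0 i (mem_index_enum i))).
Qed.

Lemma sqr_enorm v : enorm v ^+ 2 = dotv v v.
Proof. by rewrite sqr_sqrtr // dotvv_ge0. Qed.

Lemma sqr_enormZ k v : enorm (k *: v) ^+ 2 = k ^+ 2 * enorm v ^+ 2.
Proof. by rewrite !sqr_enorm dotvZl dotvZr mulrA -expr2. Qed.

Lemma sqr_enormN v : enorm (- v) ^+ 2 = enorm v ^+ 2.
Proof. by rewrite -scaleN1r sqr_enormZ sqrrN expr1n mul1r. Qed.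

(* Weighted Cauchy-Schwarz with 1/6 + 1/2 + 1/3 = 1. *)
Lemma sqr_enormD3_le u v w :
  enorm (u + v + w) ^+ 2 <= 6 * enorm u ^+ 2 + 2 * enorm v ^+ 2 + 3 * enorm w ^+ 2.
Proof.
rewrite !sqr_enorm /dotv !mulr_sumr -!big_split /=; apply: ler_sum => i _.
rewrite !mxE; set a := u i 0; set b := v i 0; set c := w i 0.
have := sqr_ge0 (b - a - c); have := sqr_ge0 (2 * a - c); nra.
Qed.

End InnerProduct.

Section Differentials.
Context {R : realType} {n : nat}.
Implicit Types (f : 'cV[R]_n -> R) (x v : 'cV[R]_n).

Lemma diff_grad f x v : differentiable f x -> 'd f x v = dotv (grad f x) v.
Proof.
move=> df; rewrite {1}(matrix_sum_delta v) linear_sum; apply: eq_bigr => i _.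
by rewrite big_ord1 linearZ /= -deriveE // mxE mulrC.
Qed.

Lemma diff_hessian f x v :
  differentiable (grad f) x -> 'd (grad f) x v = hessian f x *m v.
Proof.
move=> df; rewrite {1}(matrix_sum_delta v) linear_sum.
apply/matrixP => i j; rewrite (ord1 j) !mxE summxE; apply: eq_bigr => k _.
rewrite big_ord1 linearZ /= -deriveE // !mxE mulrC derive_mx ?mxE //.
exact: diff_derivable.
Qed.

End Differentials.

Section CurveDerivatives.
Context {R : realType} {n : nat}.
Implicit Types (u w : R -> 'cV[R]_n) (t : R).

Lemma is_derive_diff_comp (U : normedModType R) (F : 'cV[R]_n -> U) u t du :
  differentiable F (u t) -> is_derive t 1 u du ->
  is_derive t 1 (F \o u) ('d F (u t) du).
Proof.
move=> dF [/derivable1_diffP du_diff <-].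
have dFu : differentiable (F \o u) t by exact: differentiable_comp.
apply: DeriveDef; first exact/derivable1_diffP.
by rewrite deriveE // diff_comp // /= (@deriveE _ _ _ u).
Qed.

Lemma is_derive_mx_entry u t du i :
  is_derive t 1 u du -> is_derive t 1 (fun s => u s i 0) (du i 0).
Proof.
move=> [du_ex <-]; apply: DeriveDef; first exact: (derivable_mxP u t 1).1 du_ex i 0.
by rewrite derive_mx // mxE.
Qed.

Lemma is_derive_dotv u w t du dw :
  is_derive t 1 u du -> is_derive t 1 w dw ->
  is_derive t 1 (fun s => dotv (u s) (w s)) (dotv du (w t) + dotv (u t) dw).
Proof.
move=> Du Dw.
have Dentry i : is_derive t 1 (fun s => u s i 0 * w s i 0)
    (du i 0 * w t i 0 + u t i 0 * dw i 0).
  apply: is_derive_eq (is_deriveM (is_derive_mx_entry i Du) (is_derive_mx_entry i Dw)) _.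
  by rewrite addrC mulrC.
have [ex Dval] := is_derive_sum Dentry.
have Esum : \sum_(i < n) (fun s => u s i 0 * w s i 0) = (fun s => dotv (u s) (w s)).
  by apply/funext => s; rewrite /dotv fct_sumE.
by rewrite Esum in ex Dval; split=> //; rewrite Dval /dotv -big_split.
Qed.

Lemma is_derive_sqr_enorm u t du :
  is_derive t 1 u du -> is_derive t 1 (fun s => enorm (u s) ^+ 2) (2 * dotv (u t) du).
Proof.
move=> Du; have [ex Dval] := is_derive_dotv Du Du.
have -> : (fun s => enorm (u s) ^+ 2) = (fun s => dotv (u s) (u s)).
  by apply/funext => s; rewrite sqr_enorm.
by split=> //; rewrite Dval dotvC mulr_natl mulr2n.
Qed.

End CurveDerivatives.

Section Convexity.
Context {R : realType} {n : nat}.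
Implicit Types (f : 'cV[R]_n -> R) (x y v : 'cV[R]_n) (mu : R).

Definition strongly_convex mu f := forall x y,
  f x + dotv (grad f x) (y - x) + mu / 2 * enorm (y - x) ^+ 2 <= f y.

Lemma strongly_convex_gap mu f x y : strongly_convex mu f ->
  f x - f y + mu / 2 * enorm (x - y) ^+ 2 <= dotv (grad f x) (x - y).
Proof. by move/(_ x y); rewrite -opprB sqr_enormN dotvNr; lra. Qed.

Lemma strongly_convex_grad_mono mu f x y : strongly_convex mu f ->
  mu * enorm (x - y) ^+ 2 <= dotv (grad f x - grad f y) (x - y).
Proof.
move=> sc; have := strongly_convex_gap x y sc; have := strongly_convex_gap y x sc.
by rewrite -(opprB x y) sqr_enormN dotvNr dotvDl dotvNl; lra.
Qed.

Lemma is_derive_line x v (r : R) : is_derive r 1 (fun s : R => s *: v + x) v.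
Proof.
have Dline := is_diffD (is_diff_scalel r v) (is_diff_cst x r).
have dline := ex_diff (is_diff_def := Dline).
have -> : (fun s : R => s *: v + x) = ( *:%R ^~ v) + cst x by [].
split; first exact/derivable1_diffP.
by rewrite deriveE // diff_val /= /GRing.add /= addr0 scale1r.
Qed.

Lemma strict_monotone_diff_psd (g : 'cV[R]_n -> 'cV[R]_n) x v :
  (forall y, differentiable g y) ->
  (forall y z, y != z -> 0 < dotv (g y - g z) (y - z)) ->
  0 <= dotv v ('d g x v).
Proof.
move=> dg mono; have [->|v0] := eqVneq v 0; first by rewrite linear0 dotvv_ge0.
pose line s := s *: v + x; pose phi s := dotv (g (line s)) v.
have Dphi (s : R) : is_derive s 1 phi (dotv ('d g (line s) v) v).
  have Dg := is_derive_diff_comp (dg (line s)) (is_derive_line x v s).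
  apply: is_derive_eq (is_derive_dotv Dg (is_derive_cst v s 1)) _.
  by rewrite dotv0r addr0.
have phi_incr : {in setT &, {homo phi : a b / a < b}}.
  move=> a b _ _ ab; rewrite -subr_gt0.
  have eline : line b - line a = (b - a) *: v.
    by rewrite /line scalerBl opprD addrACA subrr addr0.
  have := mono (line b) (line a); rewrite eline dotvZr dotvDl dotvNl -/(phi b) -/(phi a).
  rewrite pmulr_rgt0 ?subr_gt0 //; apply; rewrite -subr_eq0 eline scaler_eq0.
  by rewrite subr_eq0 negb_or gt_eqF.
have := @incr_derive1_ge0 R phi setT 0; rewrite interiorT derive1E.
rewrite (derive_val (is_derive := Dphi 0)) /line scale0r add0r dotvC; by apply.
Qed.

Lemma hessian_psd mu f x v : 0 < mu ->
  (forall y, differentiable (grad f) y) -> strongly_convex mu f ->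
  0 <= dotv v (hessian f x *m v).
Proof.
move=> mu_gt0 dg sc; rewrite -diff_hessian //; apply: strict_monotone_diff_psd => // y z yz.
apply: lt_le_trans (strongly_convex_grad_mono y z sc).
by rewrite mulr_gt0 // sqr_enorm lt_def dotvv_ge0 dotvv_eq0 subr_eq0 yz.
Qed.

End Convexity.

Section Energy.
Context {R : realType} {n : nat}.
Variables (f : 'cV[R]_n -> R) (xs : 'cV[R]_n) (X : R -> 'cV[R]_n) (c m b : R).

Let V := 'D_1 X.

(* The paper's E_beta, with c = 1 + sqrt(mu s), m = sqrt(mu) and b = beta sqrt(s). *)
Definition energy t := c * (f (X t) - f xs) + 4^-1 * enorm (V t) ^+ 2
  + 4^-1 * enorm (V t + (2 * m) *: (X t - xs) + b *: grad f (X t)) ^+ 2.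

Lemma is_derive_energy t :
  differentiable f (X t) -> differentiable (grad f) (X t) ->
  derivable X t 1 -> derivable V t 1 ->
  'D_1 V t + (2 * m) *: V t + b *: (hessian f (X t) *m V t) + c *: grad f (X t) = 0 ->
  is_derive t 1 energy (- (m * enorm (V t) ^+ 2)
    - b / 2 * dotv (V t) (hessian f (X t) *m V t)
    - c * m * dotv (grad f (X t)) (X t - xs) - c * b / 2 * enorm (grad f (X t)) ^+ 2).
Proof.
move=> df dg /derivableP DX /derivableP DV ode.
set g := grad f (X t); set HV := hessian f (X t) *m V t.
have Df : is_derive t 1 (f \o X) (dotv g (V t)).
  by rewrite -diff_grad //; exact: is_derive_diff_comp.
have Dg : is_derive t 1 (grad f \o X) HV.
  by rewrite /HV -diff_hessian //; exact: is_derive_diff_comp.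
have DW : is_derive t 1 (fun s => V s + (2 * m) *: (X s - xs) + b *: grad f (X s))
    (- (c *: g)).
  apply: is_derive_eq (is_deriveD (is_deriveD DV (is_deriveZ (2 * m)
    (is_deriveB DX (is_derive_cst xs t 1)))) (is_deriveZ b Dg)) _.
  by apply/eqP; rewrite -addr_eq0 subr0 ode.
have eV' : 'D_1 V t = - ((2 * m) *: V t + b *: HV + c *: g).
  by apply/eqP; rewrite -addr_eq0 !addrA ode.
apply: is_derive_eq (is_deriveD (is_deriveD (is_deriveZ c (is_deriveB Df
  (is_derive_cst (f xs) t 1))) (is_deriveZ 4^-1 (is_derive_sqr_enorm DV)))
  (is_deriveZ 4^-1 (is_derive_sqr_enorm DW))) _.
rewrite eV' !sqr_enorm !(dotvDl, dotvDr, dotvZl, dotvZr, dotvNl, dotvNr).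
rewrite (dotvC (V t) g) (dotvC (X t) g) (dotvC xs g).
have scaleE (k r : R) : k *: r = k * r by [].
rewrite -/g !scaleE.
by field.
Qed.

End Energy.

(* The paper's Delta_beta, with F = f(X) - f(x* ), vv = |X'|^2 and gg = |grad f(X)|^2. *)
Definition decay_slack {R : realType} (mu s beta F vv gg : R) := 4^-1 *
  ((8 * beta * s * Num.sqrt mu - 3 * s * beta ^+ 2 * Num.sqrt mu) / 4 * gg
   + 2 * Num.sqrt mu * vv + (Num.sqrt mu + mu * Num.sqrt s) * F).

Lemma decay_slack_ge0 {R : realType} (mu s beta F vv gg : R) :
  0 < mu -> 0 < s -> 0 <= beta <= 1 -> 0 <= F -> 0 <= vv -> 0 <= gg ->
  0 <= decay_slack mu s beta F vv gg.
Proof.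
move=> mu0 s0 /andP[b0 b1] F0 vv0 gg0.
have rm0 : 0 <= Num.sqrt mu := sqrtr_ge0 mu.
have gg_term : 0 <= beta * (8 - 3 * beta) * (s * Num.sqrt mu * gg).
  by apply: mulr_ge0; [apply: mulr_ge0; lra | rewrite !mulr_ge0 // ltW].
have vv_term : 0 <= Num.sqrt mu * vv by exact: mulr_ge0.
have F_term : 0 <= (Num.sqrt mu + mu * Num.sqrt s) * F.
  by rewrite mulr_ge0 // addr_ge0 // mulr_ge0 // ltW.
rewrite /decay_slack; lra.
Qed.

(* With vHv = <X', hess f(X) X'>, pp = |X - x*|^2, pg = <grad f(X), X - x*> and
   ww = |W|^2, the left-hand side is the derivative of E_beta. *)
Lemma energy_decay_ineq {R : realType} (mu s beta F vv vHv pp pg gg ww : R) :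
  0 < mu -> 0 < s -> 0 <= beta <= 1 ->
  0 <= F -> 0 <= vv -> 0 <= vHv -> 0 <= pp -> 0 <= gg ->
  F + mu / 2 * pp <= pg ->
  ww <= 6 * vv + 2 * ((2 * Num.sqrt mu) ^+ 2 * pp)
        + 3 * ((beta * Num.sqrt s) ^+ 2 * gg) ->
  - (Num.sqrt mu * vv) - beta * Num.sqrt s / 2 * vHv
    - (1 + Num.sqrt (mu * s)) * Num.sqrt mu * pg
    - (1 + Num.sqrt (mu * s)) * (beta * Num.sqrt s) / 2 * gg
  <= - (Num.sqrt mu / 4) * ((1 + Num.sqrt (mu * s)) * F + 4^-1 * vv + 4^-1 * ww)
     - decay_slack mu s beta F vv gg.
Proof.
move=> mu0 s0 /andP[b0 b1] F0 vv0 vHv0 pp0 gg0 gap ww_le.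
rewrite /decay_slack sqrtrM; last exact: ltW.
have rm0 : 0 < Num.sqrt mu by rewrite sqrtr_gt0.
have rs0 : 0 < Num.sqrt s by rewrite sqrtr_gt0.
have emu : mu = Num.sqrt mu ^+ 2 by rewrite sqr_sqrtr // ltW.
have es : s = Num.sqrt s ^+ 2 by rewrite sqr_sqrtr // ltW.
set rm := Num.sqrt mu in rm0 emu ww_le *; set rs := Num.sqrt s in rs0 es ww_le *.
rewrite {}emu {}es in gap *.
have crm_gt0 : 0 < (1 + rm * rs) * rm by rewrite mulr_gt0 // ltr_wpDr // mulr_ge0 // ltW.
have ww_scaled := ler_wpM2l (ltW rm0) ww_le.
have gap_scaled := ler_wpM2l (ltW crm_gt0) gap.
have vHv_term : 0 <= beta * rs * vHv by rewrite !mulr_ge0 // ltW.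
have gg_term : 0 <= beta * rs * gg by rewrite !mulr_ge0 // ltW.
have pp_term : 0 <= rm * rs * rm * rm ^+ 2 * pp by rewrite !mulr_ge0 // ltW.
have F_term : 0 <= (1 + rm * rs) * rm * F by rewrite mulr_ge0 // ltW.
have vv_term : 0 <= rm * vv by rewrite mulr_ge0 // ltW.
lra.
Qed.

Unset Implicit Arguments.

Theorem lemma4p2 (R : realType) (n : nat) (mu L beta s : R)
  (f : 'cV[R]_n -> R) (xs : 'cV[R]_n) (X : R -> 'cV[R]_n) :
  0 < mu -> mu <= L -> S2 mu L f ->
  (forall y, f xs <= f y) ->
  0 <= beta <= 1 -> 0 < s ->
  (forall t, 0 < t -> derivable X t 1) ->
  (forall t, 0 < t -> derivable ('D_1 X) t 1) ->
  (forall t, 0 < t ->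
     'D_1 ('D_1 X) t + (2 * Num.sqrt mu) *: 'D_1 X t
     + (beta * Num.sqrt s) *: (hessian f (X t) *m 'D_1 X t)
     + (1 + Num.sqrt (mu * s)) *: grad f (X t) = 0) ->
  let E := fun t => (1 + Num.sqrt (mu * s)) * (f (X t) - f xs)
      + 4^-1 * enorm ('D_1 X t) ^+ 2
      + 4^-1 * enorm ('D_1 X t + (2 * Num.sqrt mu) *: (X t - xs)
                      + (beta * Num.sqrt s) *: grad f (X t)) ^+ 2 in
  let Delta := fun t => 4^-1 *
      ((8 * beta * s * Num.sqrt mu - 3 * s * beta ^+ 2 * Num.sqrt mu) / 4
         * enorm (grad f (X t)) ^+ 2
       + 2 * Num.sqrt mu * enorm ('D_1 X t) ^+ 2
       + (Num.sqrt mu + mu * Num.sqrt s) * (f (X t) - f xs)) in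
  forall t, 0 < t ->
    derivable E t 1 /\
    'D_1 E t <= - (Num.sqrt mu / 4) * E t - Delta t /\
    'D_1 E t <= - (Num.sqrt mu / 4) * E t.
Proof.
move=> mu_gt0 _ [df dg sc _ _] xs_min beta01 s_gt0 dX dV ode E Delta t t_gt0.
have DE : is_derive t 1 E _ :=
  is_derive_energy xs (df _) (dg _) (dX t t_gt0) (dV t t_gt0) (ode t t_gt0).
have F_ge0 : 0 <= f (X t) - f xs by rewrite subr_ge0.
have W_bound := sqr_enormD3_le ('D_1 X t) ((2 * Num.sqrt mu) *: (X t - xs))
  ((beta * Num.sqrt s) *: grad f (X t)).
rewrite !sqr_enormZ in W_bound.
have decay : 'D_1 E t <= - (Num.sqrt mu / 4) * E t - Delta t.
  rewrite derive_val; apply: (energy_decay_ineq mu_gt0 s_gt0 beta01 F_ge0) W_bound.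
  - exact: sqr_ge0.
  - exact: hessian_psd mu_gt0 dg sc.
  - exact: sqr_ge0.
  - exact: sqr_ge0.
  - exact: strongly_convex_gap (X t) xs sc.
have slack : 0 <= Delta t.
  exact: decay_slack_ge0 mu_gt0 s_gt0 beta01 F_ge0 (sqr_ge0 _) (sqr_ge0 _).
split; [exact: ex_derive | split=> //]; lra.
Qed.
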